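(* Let $\epsilon_1=\sup\{\psi_0(x,\tfrac1{2000}):\ \tfrac1{2000}<x<\tfrac12\}$ (one has $-\infty<\epsilon_1<0$). If $0<y<x<\tfrac14$ and $\psi_0(x,y)>\epsilon_1$, then $y<\tfrac1{2000}$.
   Context: $\mathbb{T}^2=[-\tfrac12,\tfrac12]^2$ with opposite sides identified. $\mathrm{sgn}(t)=1$ for $t>0$, $-1$ for $t\le0$. $\psi_0=\Delta^{-1}[\mathrm{sgn}(x)\mathrm{sgn}(y)]$, where $\Delta^{-1}$ is the inverse Laplacian on mean-zero functions on $\mathbb{T}^2$ (convolution with the torus Green's function); $\psi_0$ is odd in $x$ and in $y$ and negative on $(0,\tfrac12)^2$. *)

From Stdlib Require Import Reals ZArith.
From Coquelicot Require Import Coquelicot.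
Open Scope R_scope.

Definition sgn (t : R) : R := if Rlt_dec 0 t then 1 else -1.

(* The right-hand side sgn(x) sgn(y) on the torus [-1/2,1/2]^2. *)
Definition f0 (x y : R) : R := sgn x * sgn y.

Definition phase (m n : Z) (x y : R) : R := 2 * PI * (IZR m * x + IZR n * y).

(* Real Fourier coefficients on the torus [-1/2,1/2]^2:
   ghat(m,n) = a(m,n) - i b(m,n) with
   a = \int\int g cos(phase), b = \int\int g sin(phase). *)
Definition fcos (g : R -> R -> R) (m n : Z) : R :=
  RInt (fun x => RInt (fun y => g x y * cos (phase m n x y)) (-1/2) (1/2)) (-1/2) (1/2).
Definition fsin (g : R -> R -> R) (m n : Z) : R :=
  RInt (fun x => RInt (fun y => g x y * sin (phase m n x y)) (-1/2) (1/2)) (-1/2) (1/2).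

(* Term (m,n) of Delta^{-1} g: the mode ghat(m,n) e^{i phase} (real part,
   summed over all of Z^2) divided by the eigenvalue -4 pi^2 (m^2+n^2);
   the zero mode is dropped (inverse Laplacian on mean-zero functions). *)
Definition invlap_term (g : R -> R -> R) (m n : Z) (x y : R) : R :=
  if (Z.eqb m 0 && Z.eqb n 0)%bool then 0
  else - (fcos g m n * cos (phase m n x y) + fsin g m n * sin (phase m n x y))
         / (4 * PI ^ 2 * (IZR m ^ 2 + IZR n ^ 2)).

(* Square partial sums over |m|,|n| <= N. *)
Definition invlap_partial (g : R -> R -> R) (N : nat) (x y : R) : R :=
  sum_f_R0 (fun i =>
    sum_f_R0 (fun j =>
      invlap_term g (Z.of_nat i - Z.of_nat N)%Z (Z.of_nat j - Z.of_nat N)%Z x y)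
    (2 * N)) (2 * N).

Definition invlap (g : R -> R -> R) (x y : R) : R :=
  real (Lim_seq (fun N => invlap_partial g N x y)).

Definition psi0 (x y : R) : R := invlap f0 x y.

Definition eps1 : Rbar :=
  Lub_Rbar (fun v => exists x, 1/2000 < x < 1/2 /\ v = psi0 x (1/2000)).

(* With [theta = 2 PI x] and [phi = 2 PI y], the Fourier series of [psi0] has only
   odd sine modes, and summing the inner series in closed form gives
     - psi0 x y = sum_k 4 / (PI^4 m_k) sin (m_k theta) E_(m_k) phi,   m_k = 2k + 1,
   with E_m phi = PI / (4 m^2) (1 - cosh (m (phi - PI/2)) / cosh (m PI / 2)); the
   closed form comes from solving D'' = m^2 D with D (0) = D (PI) = 0. For
   0 <= phi0 <= phi <= PI/2 the weights (E_m phi - E_m phi0) / m are nonnegative and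
   nonincreasing in m, and the partial sums of sin (m_k theta) equal
   sin ((K+1) theta)^2 / sin theta >= 0, so Abel summation shows that psi0 x y is
   nonincreasing in y on [0, 1/4]. Hence y >= 1/2000 would give
   psi0 x y <= psi0 x (1/2000) <= eps1. *)

From Stdlib Require Import Reals Lra Lia Ranalysis5.
From Coquelicot Require Import Coquelicot.
Open Scope R_scope.

(* Equalities between [sum_n]/[Series] terms are typed in Coquelicot's algebraic
   hierarchy; retyping them at [R] lets [ring] and [field] apply. *)
Ltac R_eq := match goal with |- ?a = ?b => change (@eq R a b) end.

Lemma sum_n_0 (a : nat -> R) : sum_n a 0 = a 0%nat.
Proof. now rewrite sum_O. Qed.

Lemma sum_n_S (a : nat -> R) n : sum_n a (S n) = sum_n a n + a (S n).
Proof. now rewrite sum_Sn. Qed.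

Lemma sum_n_ext_R (a b : nat -> R) N : (forall k, a k = b k) -> sum_n a N = sum_n b N.
Proof. apply sum_n_ext. Qed.

Lemma sum_n_opp_R (a : nat -> R) N : sum_n (fun k => - a k) N = - sum_n a N.
Proof. induction N; R_eq; rewrite ?sum_n_0, ?sum_n_S, ?IHN; ring. Qed.

Lemma sum_n_scal_R (c : R) (a : nat -> R) N : sum_n (fun k => c * a k) N = c * sum_n a N.
Proof. induction N; R_eq; rewrite ?sum_n_0, ?sum_n_S, ?IHN; ring. Qed.

Lemma sum_n_plus_R (a b : nat -> R) N : sum_n (fun k => a k + b k) N = sum_n a N + sum_n b N.
Proof. induction N; R_eq; rewrite ?sum_n_0, ?sum_n_S, ?IHN; ring. Qed.

Lemma sum_n_minus_R (a b : nat -> R) N : sum_n (fun k => a k - b k) N = sum_n a N - sum_n b N.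
Proof. induction N; R_eq; rewrite ?sum_n_0, ?sum_n_S, ?IHN; ring. Qed.

Lemma sum_n_le_R (a b : nat -> R) N : (forall k, a k <= b k) -> sum_n a N <= sum_n b N.
Proof. intro H. induction N; rewrite ?sum_n_0, ?sum_n_S; [|specialize (H (S N))]; auto; lra. Qed.

Lemma Rabs_sum_n_le (a : nat -> R) N : Rabs (sum_n a N) <= sum_n (fun k => Rabs (a k)) N.
Proof.
  induction N; rewrite ?sum_n_0, ?sum_n_S; [lra|].
  eapply Rle_trans; [apply Rabs_triang | lra].
Qed.

Lemma sum_n_Abel (s w : nat -> R) K :
  sum_n (fun k => s k * w k) K
  = sum_n (fun k => sum_n s k * (w k - w (S k))) K + sum_n s K * w (S K).
Proof. induction K; R_eq; rewrite ?sum_n_0, ?sum_n_S, ?IHK; ring. Qed.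

Lemma sum_n_Abel_nonneg (s w : nat -> R) K :
  (forall k, 0 <= sum_n s k) -> (forall k, 0 <= w k) -> (forall k, w (S k) <= w k) ->
  0 <= sum_n (fun k => s k * w k) K.
Proof.
  intros Hs Hw Hdecr. rewrite sum_n_Abel.
  apply Rplus_le_le_0_compat; [|apply Rmult_le_pos; auto].
  apply Rle_trans with (sum_n (fun _ => 0 * 0) K).
  - rewrite sum_n_scal_R. lra.
  - apply sum_n_le_R. intro k. specialize (Hdecr k). rewrite Rmult_0_l.
    apply Rmult_le_pos; auto; lra.
Qed.

Lemma ex_series_le_R (a b : nat -> R) :
  (forall n, Rabs (a n) <= b n) -> ex_series b -> ex_series a.
Proof. apply (@ex_series_le R_AbsRing R_CompleteNormedModule). Qed.

Lemma ex_series_scal_R (c : R) (a : nat -> R) : ex_series a -> ex_series (fun n => c * a n).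
Proof. apply (@ex_series_scal_l R_AbsRing R_CompleteNormedModule). Qed.

Lemma Series_eq_0 (a : nat -> R) : (forall k, a k = 0) -> Series a = 0.
Proof.
  intro H. rewrite (Series_ext a (fun k => 0 * 0)) by (intro; rewrite H; ring).
  rewrite Series_scal_l. ring.
Qed.

Lemma is_series_nonneg (a : nat -> R) l : is_series a l -> (forall N, 0 <= sum_n a N) -> 0 <= l.
Proof.
  intros Ha Hpos. exact (is_lim_seq_le (fun _ => 0) (sum_n a) 0 l Hpos (is_lim_seq_const 0) Ha).
Qed.

Lemma Series_tail_nonneg (b : nat -> R) N :
  (forall i, 0 <= b i) -> ex_series b -> 0 <= Series b - sum_n b N.
Proof.
  intros Hb Hex. rewrite (Series_incr_n b (S N)) by (lia || auto).
  simpl pred. rewrite <- sum_n_Reals.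
  replace (sum_n b N + Series (fun k => b (S N + k)%nat) - sum_n b N)
    with (Series (fun k => b (S N + k)%nat)) by (R_eq; ring).
  rewrite <- (Series_eq_0 (fun _ => 0)) by auto.
  apply Series_le; [intro; split; [lra | auto] | now apply ex_series_incr_n].
Qed.

Lemma Rabs_Series_tail_le (a M : nat -> R) :
  (forall k, Rabs (a k) <= M k) -> ex_series M ->
  forall N, Rabs (Series a - sum_n a N) <= Series M - sum_n M N.
Proof.
  intros HaM HM N.
  assert (Ha : ex_series a) by now apply ex_series_le_R with M.
  rewrite (Series_incr_n a (S N)), (Series_incr_n M (S N)) by (lia || auto).
  simpl pred. rewrite <- !sum_n_Reals.
  replace (sum_n a N + Series (fun k => a (S N + k)%nat) - sum_n a N)
    with (Series (fun k => a (S N + k)%nat)) by ring.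
  replace (sum_n M N + Series (fun k => M (S N + k)%nat) - sum_n M N)
    with (Series (fun k => M (S N + k)%nat)) by ring.
  eapply Rle_trans; [apply Series_Rabs|].
  - apply ex_series_le_R with (fun k => M (S N + k)%nat).
    + intro k. rewrite Rabs_Rabsolu. apply HaM.
    + now apply ex_series_incr_n.
  - apply Series_le; [intro k; split; [apply Rabs_pos | apply HaM] | now apply ex_series_incr_n].
Qed.

Lemma is_lim_seq_Series_tail (M : nat -> R) :
  ex_series M -> is_lim_seq (fun N => Series M - sum_n M N) 0.
Proof.
  intro HM. replace 0 with (Series M - Series M) by ring.
  apply is_lim_seq_minus'; [apply is_lim_seq_const | now apply Series_correct].
Qed.

Lemma is_lim_seq_inv_S (c : R) : is_lim_seq (fun N => c / INR (S N)) 0.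
Proof.
  replace 0 with (c * 0) by ring.
  apply (is_lim_seq_scal_l _ c 0).
  replace (Finite 0) with (Rbar_inv p_infty) by reflexivity.
  apply is_lim_seq_inv; [| discriminate].
  apply (is_lim_seq_incr_1 INR p_infty), is_lim_seq_INR.
Qed.

(* A summable majorant of the inverse squares, with telescoping partial sums. *)
Definition inv_succ_succ (k : nat) : R := 2 / ((INR k + 1) * (INR k + 2)).

Lemma ex_series_inv_succ_succ : ex_series inv_succ_succ.
Proof.
  exists 2. change (is_lim_seq (sum_n inv_succ_succ) 2).
  apply is_lim_seq_ext with (u := fun N => 2 - 2 / (INR N + 2)).
  { intro N. unfold inv_succ_succ.
    induction N as [|N IHN]; R_eq.
    - rewrite sum_n_0. simpl. field.
    - rewrite sum_n_S, <- IHN, S_INR. pose proof (pos_INR N). field. lra. }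
  replace 2 with (2 - 0) at 1 by ring.
  apply is_lim_seq_minus'; [apply is_lim_seq_const|].
  apply is_lim_seq_ext with (fun N => 2 / INR (S (S N))); [|
    apply (is_lim_seq_incr_1 (fun N => 2 / INR (S N))), is_lim_seq_inv_S].
  intro N. rewrite !S_INR. f_equal. ring.
Qed.

Lemma continuous_sum_n (a : nat -> R -> R) x N :
  (forall k, continuous (a k) x) -> continuous (fun t => sum_n (fun k => a k t) N) x.
Proof.
  intro H. induction N.
  - apply continuous_ext with (a 0%nat); [intro; now rewrite sum_n_0 | apply H].
  - apply continuous_ext with (fun t => sum_n (fun k => a k t) N + a (S N) t).
    + intro; now rewrite sum_n_S.
    + now apply (continuous_plus (fun t => sum_n (fun k => a k t) N) (a (S N))).
Qed.

Lemma CVU_Series (a : nat -> R -> R) (M : nat -> R) x (r : posreal) :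
  (forall k t, Rabs (a k t) <= M k) -> ex_series M ->
  CVU (fun n t => sum_n (fun k => a k t) n) (fun t => Series (fun k => a k t)) x r.
Proof.
  intros Ha HM eps Heps.
  assert (Htail := is_lim_seq_Series_tail M HM). apply is_lim_seq_Reals in Htail.
  destruct (Htail eps Heps) as [N HN]. exists N. intros n t Hn _.
  specialize (HN n Hn). unfold R_dist in HN. rewrite Rminus_0_r in HN.
  apply Rabs_def2 in HN.
  eapply Rle_lt_trans; [now apply (Rabs_Series_tail_le (fun k => a k t) M) | lra].
Qed.

Lemma is_derive_Series (a a' : nat -> R -> R) (M : nat -> R) x :
  (forall k t, is_derive (a k) t (a' k t)) -> (forall k t, continuous (a' k) t) ->
  (forall k t, Rabs (a k t) <= M k) -> (forall k t, Rabs (a' k t) <= M k) -> ex_series M ->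
  is_derive (fun t => Series (fun k => a k t)) x (Series (fun k => a' k x)).
Proof.
  intros Hd Hc Ha Ha' HM. set (r := mkposreal 1 Rlt_0_1).
  assert (HCVU := CVU_Series a' M x r Ha' HM).
  apply is_derive_Reals.
  apply (derivable_pt_lim_CVU (fun n t => sum_n (fun k => a k t) n)
           (fun n t => sum_n (fun k => a' k t) n) (fun t => Series (fun k => a k t))
           (fun t => Series (fun k => a' k t)) x x r).
  - unfold Boule. rewrite Rminus_eq_0, Rabs_R0. simpl; lra.
  - intros y n _. apply is_derive_Reals.
    apply (is_derive_sum_n (V := R_NormedModule) a n y (fun k => a' k y)). auto.
  - intros y _. apply is_lim_seq_Reals, Series_correct.
    now apply ex_series_le_R with M.
  - exact HCVU.
  - intros y Hy. apply (CVU_continuity _ _ x r HCVU); auto.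
    intros n z _. apply continuity_pt_filterlim, continuous_sum_n. auto.
Qed.

Lemma is_derive_nonneg_le f f' a b :
  a <= b -> (forall c, a <= c <= b -> is_derive f c (f' c)) ->
  (forall c, a < c < b -> 0 <= f' c) -> f a <= f b.
Proof.
  intros Hab Hd Hpos. destruct (Req_dec a b) as [->|Hne]; [lra|].
  destruct (MVT_cor2 f f' a b) as [c [Hc1 Hc2]]; [lra| |].
  - intros c Hc. apply is_derive_Reals. auto.
  - pose proof (Hpos c Hc2). nra.
Qed.

Lemma is_derive_eq_0_const f f' a b :
  a <= b -> (forall c, a <= c <= b -> is_derive f c (f' c)) ->
  (forall c, a < c < b -> f' c = 0) -> f b = f a.
Proof.
  intros Hab Hd H0. apply Rle_antisym.
  - enough (- f a <= - f b) by lra.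
    apply (is_derive_nonneg_le (fun t => - f t) (fun t => - f' t) a b Hab).
    + intros c Hc. apply (is_derive_opp f). auto.
    + intros c Hc. rewrite H0 by auto. lra.
  - apply (is_derive_nonneg_le f f' a b Hab Hd). intros c Hc. rewrite H0 by auto. lra.
Qed.

Lemma Rabs_sub_le_is_derive g g' h h' a b : a <= b ->
  (forall c, a <= c <= b -> is_derive g c (g' c)) ->
  (forall c, a <= c <= b -> is_derive h c (h' c)) ->
  (forall c, a < c < b -> Rabs (g' c) <= h' c) -> Rabs (g b - g a) <= h b - h a.
Proof.
  intros Hab Hg Hh Hbound. apply Rabs_le. split.
  - enough (h a + g a <= h b + g b) by lra.
    apply (is_derive_nonneg_le (fun t => h t + g t) (fun t => h' t + g' t) a b Hab).
    + intros c Hc. apply (is_derive_plus h g); auto.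
    + intros c Hc. specialize (Hbound c Hc). apply Rabs_le_between in Hbound. lra.
  - enough (h a - g a <= h b - g b) by lra.
    apply (is_derive_nonneg_le (fun t => h t - g t) (fun t => h' t - g' t) a b Hab).
    + intros c Hc. apply (is_derive_minus h g); auto.
    + intros c Hc. specialize (Hbound c Hc). apply Rabs_le_between in Hbound. lra.
Qed.

(** * Sine and cosine series over odd frequencies *)

Lemma Rabs_sin_le_1 t : Rabs (sin t) <= 1.
Proof. apply Rabs_le, SIN_bound. Qed.

Lemma Rabs_cos_le_1 t : Rabs (cos t) <= 1.
Proof. apply Rabs_le, COS_bound. Qed.

Definition oddR (k : nat) : R := 2 * INR k + 1.

Lemma oddR_ge_1 k : 1 <= oddR k.
Proof. unfold oddR. pose proof (pos_INR k). lra. Qed.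

Lemma oddR_S k : oddR (S k) = oddR k + 2.
Proof. unfold oddR. rewrite S_INR. ring. Qed.

Lemma oddR_INR k : oddR k = INR (2 * k + 1).
Proof. unfold oddR. rewrite plus_INR, mult_INR. simpl. ring. Qed.

Lemma cos_sin_oddR_PI2 k : cos (oddR k * (PI/2)) = 0 /\ sin (oddR k * (PI/2)) = (-1)^k.
Proof.
  induction k as [|k [Hc Hs]].
  - unfold oddR; simpl. replace ((2 * 0 + 1) * (PI / 2)) with (PI/2) by ring.
    rewrite cos_PI2, sin_PI2. lra.
  - rewrite oddR_S. replace ((oddR k + 2) * (PI / 2)) with (oddR k * (PI/2) + PI) by field.
    rewrite neg_cos, neg_sin, Hc, Hs. simpl. lra.
Qed.

Lemma sin_oddR_PI k : sin (oddR k * PI) = 0.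
Proof.
  replace (oddR k * PI) with (2 * (oddR k * (PI/2))) by field.
  rewrite sin_2a, (proj1 (cos_sin_oddR_PI2 k)). ring.
Qed.

Lemma cos_oddR_PI k : cos (oddR k * PI) = -1.
Proof.
  replace (oddR k * PI) with (2 * (oddR k * (PI/2))) by field.
  rewrite cos_2a_cos, (proj1 (cos_sin_oddR_PI2 k)). ring.
Qed.

Lemma cos_oddR_PI_minus k t : cos (oddR k * (PI - t)) = - cos (oddR k * t).
Proof.
  replace (oddR k * (PI - t)) with (oddR k * PI - oddR k * t) by ring.
  rewrite cos_minus, cos_oddR_PI, sin_oddR_PI. ring.
Qed.

Lemma sin_mul_sum_cos_oddR N t :
  2 * sin t * sum_n (fun k => cos (oddR k * t)) N = sin (2 * INR (S N) * t).
Proof.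
  induction N.
  - rewrite sum_n_0. unfold oddR. simpl. replace ((2 * 0 + 1) * t) with t by ring.
    replace (2 * 1 * t) with (2 * t) by ring. rewrite sin_2a. ring.
  - rewrite sum_n_S, Rmult_plus_distr_l, IHN, (S_INR (S N)).
    replace (2 * (INR (S N) + 1) * t) with (oddR (S N) * t + t) by (unfold oddR; ring).
    replace (2 * INR (S N) * t) with (oddR (S N) * t - t) by (unfold oddR; ring).
    rewrite sin_plus, sin_minus. ring.
Qed.

Lemma sin_mul_sum_sin_oddR t K :
  sin t * sum_n (fun k => sin (oddR k * t)) K = sin (INR (S K) * t) ^ 2.
Proof.
  induction K.
  - rewrite sum_n_0. unfold oddR. simpl.
    replace ((2 * 0 + 1) * t) with t by ring. replace (1 * t) with t by ring. ring.
  - rewrite sum_n_S, Rmult_plus_distr_l, IHK.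
    set (a := INR (S (S K)) * t). set (b := INR (S K) * t).
    replace (oddR (S K) * t) with (a + b) by (unfold a, b, oddR; rewrite !S_INR; ring).
    replace (sin t) with (sin (a - b)) by (f_equal; unfold a, b; rewrite !S_INR; ring).
    rewrite sin_plus, sin_minus.
    pose proof (sin2_cos2 a). pose proof (sin2_cos2 b). unfold Rsqr in *. nra.
Qed.

Lemma sum_sin_oddR_nonneg t K : 0 < t < PI -> 0 <= sum_n (fun k => sin (oddR k * t)) K.
Proof.
  intros [Ht0 HtPI]. pose proof (sin_gt_0 t Ht0 HtPI).
  pose proof (sin_mul_sum_sin_oddR t K). pose proof (pow2_ge_0 (sin (INR (S K) * t))). nra.
Qed.

Definition sin_odd_sum N t := sum_n (fun k => sin (oddR k * t) / oddR k) N.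
Definition cos_odd_sq_sum N t := sum_n (fun k => cos (oddR k * t) / oddR k ^ 2) N.

Lemma is_derive_sin_odd_sum N t :
  is_derive (sin_odd_sum N) t (sum_n (fun k => cos (oddR k * t)) N).
Proof.
  apply (is_derive_sum_n (V := R_NormedModule) (fun k t => sin (oddR k * t) / oddR k)).
  intros k _. pose proof (oddR_ge_1 k). auto_derive; [lra|]. field. lra.
Qed.

Lemma is_derive_cos_odd_sq_sum N t : is_derive (cos_odd_sq_sum N) t (- sin_odd_sum N t).
Proof.
  unfold sin_odd_sum. rewrite <- sum_n_opp_R.
  apply (is_derive_sum_n (V := R_NormedModule) (fun k t => cos (oddR k * t) / oddR k ^ 2)).
  intros k _. pose proof (oddR_ge_1 k). auto_derive; [lra|]. field. lra.
Qed.

Lemma is_lim_seq_sin_odd_sum_PI2 : is_lim_seq (fun N => sin_odd_sum N (PI/2)) (PI/4).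
Proof.
  apply is_lim_seq_ext with (fun N => sum_f_R0 (tg_alt PI_tg) N).
  { intro N. unfold sin_odd_sum. rewrite <- sum_n_Reals. apply sum_n_ext_R. intro k.
    unfold tg_alt, PI_tg. rewrite (proj2 (cos_sin_oddR_PI2 k)), oddR_INR. reflexivity. }
  apply is_lim_seq_Reals.
  pose proof Alt_PI_eq as HA. unfold Alt_PI in HA. destruct exist_PI as [l Hl].
  replace (PI/4) with l by lra. exact Hl.
Qed.

(* Adding [cos (2 L t) / (4 L sin t)] cancels the Dirichlet kernel
   [sum_k cos (oddR k t) = sin (2 L t) / (2 sin t)] from the derivative. *)
Lemma is_derive_sin_odd_sum_corrected N t : 0 < sin t ->
  is_derive (fun t => sin_odd_sum N t + cos (2 * INR (S N) * t) / (4 * INR (S N) * sin t)) t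
    (- (cos (2 * INR (S N) * t) * cos t) / (4 * INR (S N) * sin t ^ 2)).
Proof.
  intro Hs. set (L := INR (S N)).
  assert (HL : 1 <= L) by (unfold L; rewrite S_INR; pose proof (pos_INR N); lra).
  assert (Hkernel : sum_n (fun k => cos (oddR k * t)) N = sin (2 * L * t) / (2 * sin t)).
  { apply (Rmult_eq_reg_l (2 * sin t)); [|lra].
    rewrite sin_mul_sum_cos_oddR. fold L. field. lra. }
  assert (Hq : is_derive (fun t => cos (2 * L * t) / (4 * L * sin t)) t
      ((- (2 * L * sin (2 * L * t)) * (4 * L * sin t) - cos (2 * L * t) * (4 * L * cos t))
       / (4 * L * sin t) ^ 2)).
  { auto_derive; [nra|]. field. split; lra. }
  replace (- (cos (2 * L * t) * cos t) / (4 * L * sin t ^ 2)) with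
    (sum_n (fun k => cos (oddR k * t)) N
     + ((- (2 * L * sin (2 * L * t)) * (4 * L * sin t) - cos (2 * L * t) * (4 * L * cos t))
        / (4 * L * sin t) ^ 2)).
  - apply (is_derive_plus (sin_odd_sum N)); [apply is_derive_sin_odd_sum | exact Hq].
  - rewrite Hkernel. field. split; lra.
Qed.

Lemma Rabs_cos_div_le c d : 0 < d -> Rabs (cos c / d) <= / d.
Proof.
  intro Hd. rewrite Rabs_div, (Rabs_pos_eq d) by lra. unfold Rdiv.
  rewrite <- (Rmult_1_l (/ d)) at 2.
  apply Rmult_le_compat_r; [apply Rlt_le, Rinv_0_lt_compat; lra | apply Rabs_cos_le_1].
Qed.

Lemma sin_odd_sum_corrected_sub_le N s : 0 < s <= PI/2 ->
  Rabs ((sin_odd_sum N (PI/2) + cos (2 * INR (S N) * (PI/2)) / (4 * INR (S N)))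
        - (sin_odd_sum N s + cos (2 * INR (S N) * s) / (4 * INR (S N) * sin s)))
  <= / (4 * INR (S N) * sin s) - / (4 * INR (S N)).
Proof.
  intros Hs. set (L := INR (S N)).
  assert (HL : 1 <= L) by (unfold L; rewrite S_INR; pose proof (pos_INR N); lra).
  assert (Hsin : forall t, s <= t <= PI/2 -> 0 < sin t) by (intros t Ht; apply sin_gt_0; lra).
  assert (Hss : 0 < sin s) by (apply Hsin; lra).
  replace (/ (4 * L * sin s) - / (4 * L)) with (- 1 / (4 * L) - - 1 / (4 * L * sin s))
    by (field; lra).
  assert (H := Rabs_sub_le_is_derive
           (fun t => sin_odd_sum N t + cos (2 * L * t) / (4 * L * sin t))
           (fun t => - (cos (2 * L * t) * cos t) / (4 * L * sin t ^ 2))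
           (fun t => - 1 / (4 * L * sin t)) (fun t => cos t / (4 * L * sin t ^ 2)) s (PI/2)).
  cbv beta in H. rewrite sin_PI2, !Rmult_1_r in H. apply H; [lra | | |].
  - intros t Ht. now apply is_derive_sin_odd_sum_corrected, Hsin.
  - intros t Ht. specialize (Hsin t Ht). auto_derive; [nra|]. field. split; lra.
  - intros t Ht. specialize (Hsin t ltac:(lra)).
    assert (0 <= cos t) by (apply cos_ge_0; lra).
    pose proof (Rabs_cos_le_1 (2 * L * t)).
    rewrite Rabs_div, Rabs_Ropp, Rabs_mult, (Rabs_pos_eq (cos t)),
      (Rabs_pos_eq (4 * L * sin t ^ 2)) by nra.
    apply Rmult_le_compat_r; [apply Rlt_le, Rinv_0_lt_compat|]; nra.
Qed.

Lemma sin_odd_sum_PI2_sub_le N s : 0 < s <= PI/2 ->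
  Rabs (sin_odd_sum N (PI/2) - sin_odd_sum N s) <= 1 / (2 * INR (S N) * sin s).
Proof.
  intros Hs. set (L := INR (S N)).
  assert (HL : 1 <= L) by (unfold L; rewrite S_INR; pose proof (pos_INR N); lra).
  assert (Hss : 0 < sin s) by (apply sin_gt_0; lra).
  pose proof (sin_odd_sum_corrected_sub_le N s Hs) as Hcmp. fold L in Hcmp.
  pose proof (Rabs_cos_div_le (2 * L * (PI/2)) (4 * L) ltac:(lra)) as HA.
  pose proof (Rabs_cos_div_le (2 * L * s) (4 * L * sin s) ltac:(nra)) as HB.
  apply Rabs_le_between in Hcmp, HA, HB. apply Rabs_le.
  replace (1 / (2 * L * sin s)) with (2 * / (4 * L * sin s)) by (field; lra).
  lra.
Qed.

Lemma cos_odd_sq_sum_PI2 N : cos_odd_sq_sum N (PI/2) = 0.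
Proof.
  unfold cos_odd_sq_sum. rewrite (sum_n_ext_R _ (fun k => 0 * 0)).
  - R_eq. rewrite sum_n_scal_R. ring.
  - intro k. rewrite (proj1 (cos_sin_oddR_PI2 k)). unfold Rdiv. ring.
Qed.

Lemma cos_odd_sq_sum_PI_minus N t : cos_odd_sq_sum N (PI - t) = - cos_odd_sq_sum N t.
Proof.
  unfold cos_odd_sq_sum. rewrite <- sum_n_opp_R. apply sum_n_ext_R. intro k.
  rewrite cos_oddR_PI_minus. unfold Rdiv. ring.
Qed.

Lemma cos_odd_sq_sum_approx N phi : 0 < phi <= PI/2 ->
  Rabs (cos_odd_sq_sum N phi - (PI/2 - phi) * sin_odd_sum N (PI/2))
  <= (PI/2 - phi) / (2 * INR (S N) * sin phi).
Proof.
  intros Hphi. set (L := INR (S N)).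
  assert (HL : 1 <= L) by (unfold L; rewrite S_INR; pose proof (pos_INR N); lra).
  assert (Hsphi : 0 < sin phi) by (apply sin_gt_0; lra).
  assert (H := Rabs_sub_le_is_derive (fun t => cos_odd_sq_sum N t + t * sin_odd_sum N (PI/2))
    (fun t => - sin_odd_sum N t + sin_odd_sum N (PI/2)) (fun t => t / (2 * L * sin phi))
    (fun t => 1 / (2 * L * sin phi)) phi (PI/2)).
  cbv beta in H. rewrite cos_odd_sq_sum_PI2 in H.
  replace (cos_odd_sq_sum N phi - (PI / 2 - phi) * sin_odd_sum N (PI / 2)) with
    (- (0 + PI / 2 * sin_odd_sum N (PI / 2)
        - (cos_odd_sq_sum N phi + phi * sin_odd_sum N (PI / 2))))
    by ring.
  rewrite Rabs_Ropp.
  replace ((PI / 2 - phi) / (2 * L * sin phi)) with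
    (PI / 2 / (2 * L * sin phi) - phi / (2 * L * sin phi)) by (field; lra).
  apply H; [lra | | |].
  - intros c Hc. apply (is_derive_plus (cos_odd_sq_sum N) (fun t => t * sin_odd_sum N (PI/2))).
    + apply is_derive_cos_odd_sq_sum.
    + auto_derive; auto. ring.
  - intros c Hc. auto_derive; [exact I|]. field. lra.
  - intros c Hc.
    assert (Hsc : sin phi <= sin c) by (apply sin_incr_1; lra).
    pose proof (sin_odd_sum_PI2_sub_le N c ltac:(lra)) as HD. fold L in HD.
    replace (- sin_odd_sum N c + sin_odd_sum N (PI / 2))
      with (sin_odd_sum N (PI / 2) - sin_odd_sum N c) by ring.
    eapply Rle_trans; [exact HD|]. unfold Rdiv. rewrite !Rmult_1_l.
    apply Rinv_le_contravar; nra.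
Qed.

Lemma is_lim_seq_cos_odd_sq_sum_le_PI2 phi : 0 < phi <= PI/2 ->
  is_lim_seq (fun N => cos_odd_sq_sum N phi) (PI/4 * (PI/2 - phi)).
Proof.
  intros Hphi.
  assert (Hsphi : 0 < sin phi) by (apply sin_gt_0; lra).
  set (c := (PI/2 - phi) / (2 * sin phi)).
  assert (Hmain : is_lim_seq (fun N => (PI/2 - phi) * sin_odd_sum N (PI/2)) ((PI/2 - phi) * (PI/4)))
    by apply (is_lim_seq_scal_l _ _ (PI/4)), is_lim_seq_sin_odd_sum_PI2.
  apply is_lim_seq_le_le with
    (u := fun N => (PI/2 - phi) * sin_odd_sum N (PI/2) - c / INR (S N))
    (w := fun N => (PI/2 - phi) * sin_odd_sum N (PI/2) + c / INR (S N)).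
  - intro N. pose proof (cos_odd_sq_sum_approx N phi Hphi) as HB. apply Rabs_le_between in HB.
    replace ((PI / 2 - phi) / (2 * INR (S N) * sin phi)) with (c / INR (S N)) in HB
      by (unfold c; field; split; [lra | apply not_0_INR; lia]).
    lra.
  - replace (PI / 4 * (PI / 2 - phi)) with ((PI/2 - phi) * (PI/4) - 0) by ring.
    apply is_lim_seq_minus'; [exact Hmain | apply is_lim_seq_inv_S].
  - replace (PI / 4 * (PI / 2 - phi)) with ((PI/2 - phi) * (PI/4) + 0) by ring.
    apply is_lim_seq_plus'; [exact Hmain | apply is_lim_seq_inv_S].
Qed.

Lemma is_series_cos_oddR_div_sq t : 0 < t < PI ->
  is_series (fun k => cos (oddR k * t) / oddR k ^ 2) (PI/4 * (PI/2 - t)).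
Proof.
  intros Ht. change (is_lim_seq (fun N => cos_odd_sq_sum N t) (PI / 4 * (PI / 2 - t))).
  destruct (Rle_lt_dec t (PI/2)).
  - apply is_lim_seq_cos_odd_sq_sum_le_PI2. lra.
  - apply is_lim_seq_ext with (fun N => - cos_odd_sq_sum N (PI - t)).
    { intro N. rewrite cos_odd_sq_sum_PI_minus. ring. }
    replace (PI / 4 * (PI / 2 - t)) with (- (PI/4 * (PI/2 - (PI - t)))) by field.
    apply (is_lim_seq_opp (fun N => cos_odd_sq_sum N (PI - t)) (PI/4 * (PI/2 - (PI - t)))).
    apply is_lim_seq_cos_odd_sq_sum_le_PI2. lra.
Qed.

Definition sin_series (c : nat -> R) (t : R) := Series (fun k => sin (oddR k * t) * c k).
Definition cos_series (c : nat -> R) (t : R) := Series (fun k => cos (oddR k * t) * c k).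

Definition inv_sq_bounded (c : nat -> R) := forall k, Rabs (c k) <= / oddR k ^ 2.

Lemma Rabs_mul_inv_sq_bounded_le u c k :
  Rabs u <= 1 -> inv_sq_bounded c -> Rabs (u * c k) <= inv_succ_succ k.
Proof.
  intros Hu Hc. rewrite Rabs_mult.
  apply Rle_trans with (1 * / oddR k ^ 2).
  - apply Rmult_le_compat; auto using Rabs_pos.
  - rewrite Rmult_1_l. unfold inv_succ_succ, oddR. pose proof (pos_INR k).
    replace (2 / ((INR k + 1) * (INR k + 2))) with (/ ((INR k + 1) * (INR k + 2) / 2))
      by (field; lra).
    apply Rinv_le_contravar; nra.
Qed.

Lemma ex_series_sin_series c t : inv_sq_bounded c -> ex_series (fun k => sin (oddR k * t) * c k).
Proof.
  intro Hc. apply ex_series_le_R with inv_succ_succ; [|exact ex_series_inv_succ_succ].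
  intro k. apply Rabs_mul_inv_sq_bounded_le; auto using Rabs_sin_le_1.
Qed.

Lemma is_derive_sin_series c c' x :
  (forall k, oddR k * c k = c' k) -> inv_sq_bounded c -> inv_sq_bounded c' ->
  is_derive (sin_series c) x (cos_series c' x).
Proof.
  intros Hcc' Hc Hc'. unfold cos_series.
  rewrite (Series_ext _ (fun k => cos (oddR k * x) * (oddR k * c k))) by (intro; now rewrite Hcc').
  apply (is_derive_Series (fun k t => sin (oddR k * t) * c k)
           (fun k t => cos (oddR k * t) * (oddR k * c k)) inv_succ_succ x).
  - intros k t. auto_derive; auto. ring.
  - intros k t. apply (ex_derive_continuous (V := R_NormedModule)). auto_derive; auto.
  - intros k t. apply Rabs_mul_inv_sq_bounded_le; auto using Rabs_sin_le_1.
  - intros k t. rewrite Hcc'. apply Rabs_mul_inv_sq_bounded_le; auto using Rabs_cos_le_1.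
  - exact ex_series_inv_succ_succ.
Qed.

Lemma is_derive_cos_series c c' x :
  (forall k, oddR k * c k = c' k) -> inv_sq_bounded c -> inv_sq_bounded c' ->
  is_derive (cos_series c) x (- sin_series c' x).
Proof.
  intros Hcc' Hc Hc'. unfold sin_series.
  rewrite (Series_ext _ (fun k => sin (oddR k * x) * (oddR k * c k))) by (intro; now rewrite Hcc').
  rewrite <- Series_opp.
  apply (is_derive_Series (fun k t => cos (oddR k * t) * c k)
           (fun k t => - (sin (oddR k * t) * (oddR k * c k))) inv_succ_succ x).
  - intros k t. auto_derive; auto. ring.
  - intros k t. apply (ex_derive_continuous (V := R_NormedModule)). auto_derive; auto.
  - intros k t. apply Rabs_mul_inv_sq_bounded_le; auto using Rabs_cos_le_1.
  - intros k t. rewrite Rabs_Ropp, Hcc'. apply Rabs_mul_inv_sq_bounded_le; auto using Rabs_sin_le_1.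
  - exact ex_series_inv_succ_succ.
Qed.

Lemma sin_series_0 c : sin_series c 0 = 0.
Proof. apply Series_eq_0. intro k. rewrite Rmult_0_r, sin_0. ring. Qed.

Lemma sin_series_PI c : sin_series c PI = 0.
Proof. apply Series_eq_0. intro k. rewrite sin_oddR_PI. ring. Qed.

Definition inv_oddR_pow (p k : nat) : R := / oddR k ^ p.
Definition inv_oddR_pow_shift (m : R) (p k : nat) : R := / (oddR k ^ p * (oddR k ^ 2 + m ^ 2)).

Lemma inv_sq_bounded_inv_oddR_pow p : (2 <= p)%nat -> inv_sq_bounded (inv_oddR_pow p).
Proof.
  intros Hp k. unfold inv_oddR_pow. pose proof (oddR_ge_1 k).
  replace p with (2 + (p - 2))%nat by lia. rewrite pow_add.
  pose proof (pow_R1_Rle (oddR k) (p - 2) ltac:(lra)).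
  rewrite Rabs_pos_eq by (apply Rlt_le, Rinv_0_lt_compat; nra).
  apply Rinv_le_contravar; nra.
Qed.

Lemma inv_sq_bounded_inv_oddR_pow_shift m p : inv_sq_bounded (inv_oddR_pow_shift m p).
Proof.
  intro k. unfold inv_oddR_pow_shift. pose proof (oddR_ge_1 k).
  pose proof (pow_R1_Rle (oddR k) p ltac:(lra)). pose proof (pow2_ge_0 m).
  rewrite Rabs_pos_eq by (apply Rlt_le, Rinv_0_lt_compat; nra).
  apply Rinv_le_contravar; nra.
Qed.

Lemma oddR_mul_inv_oddR_pow p k : oddR k * inv_oddR_pow (S p) k = inv_oddR_pow p k.
Proof.
  unfold inv_oddR_pow. pose proof (oddR_ge_1 k). pose proof (pow_lt (oddR k) p ltac:(lra)).
  simpl. field. lra.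
Qed.

Lemma oddR_mul_inv_oddR_pow_shift m p k :
  oddR k * inv_oddR_pow_shift m (S p) k = inv_oddR_pow_shift m p k.
Proof.
  unfold inv_oddR_pow_shift. pose proof (oddR_ge_1 k). pose proof (pow2_ge_0 m).
  pose proof (pow_lt (oddR k) p ltac:(lra)). simpl. field. split; nra.
Qed.

Lemma inv_oddR_pow_shift_partial_fraction m k :
  inv_oddR_pow_shift m 1 k = inv_oddR_pow 3 k - m ^ 2 * inv_oddR_pow_shift m 3 k.
Proof.
  unfold inv_oddR_pow_shift, inv_oddR_pow. pose proof (oddR_ge_1 k). pose proof (pow2_ge_0 m).
  field. nra.
Qed.

Lemma cos_series_inv_oddR_sq t : 0 < t < PI -> cos_series (inv_oddR_pow 2) t = PI/4 * (PI/2 - t).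
Proof.
  intro Ht. apply is_series_unique.
  apply is_series_ext with (fun k => cos (oddR k * t) / oddR k ^ 2); [reflexivity|].
  now apply is_series_cos_oddR_div_sq.
Qed.

Lemma sin_series_inv_oddR_cube t :
  0 <= t <= PI -> sin_series (inv_oddR_pow 3) t = PI/8 * t * (PI - t).
Proof.
  intro Ht.
  assert (E := is_derive_eq_0_const (fun x => sin_series (inv_oddR_pow 3) x - PI/8 * x * (PI - x))
                (fun x => cos_series (inv_oddR_pow 2) x - PI/8 * (PI - 2 * x)) 0 t (proj1 Ht)).
  cbv beta in E. rewrite sin_series_0 in E.
  enough (sin_series (inv_oddR_pow 3) t - PI / 8 * t * (PI - t) = 0) by lra.
  rewrite E; [ring | |].
  - intros c Hc.
    apply (is_derive_minus (sin_series (inv_oddR_pow 3)) (fun x => PI/8 * x * (PI - x))).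
    + apply is_derive_sin_series;
        auto using oddR_mul_inv_oddR_pow, inv_sq_bounded_inv_oddR_pow.
    + auto_derive; auto. ring.
  - intros c Hc. rewrite cos_series_inv_oddR_sq by lra. R_eq. field.
Qed.

Lemma sin_series_partial_fraction m t :
  sin_series (inv_oddR_pow_shift m 1) t
  = sin_series (inv_oddR_pow 3) t - m ^ 2 * sin_series (inv_oddR_pow_shift m 3) t.
Proof.
  unfold sin_series. rewrite <- Series_scal_l, <- Series_minus.
  - apply Series_ext. intro k. rewrite inv_oddR_pow_shift_partial_fraction. ring.
  - apply ex_series_sin_series, inv_sq_bounded_inv_oddR_pow. lia.
  - apply ex_series_scal_R, ex_series_sin_series, inv_sq_bounded_inv_oddR_pow_shift.
Qed.

(** * A boundary value problem for [D'' = m^2 D] *)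

(* Abstracts every [exp _] into a positive variable, so that [field] sees a
   rational identity. *)
Ltac generalize_exp :=
  unfold Rminus in *;
  repeat match goal with |- context [exp ?x] =>
    let e := fresh "e" in pose proof (exp_pos x); set (e := exp x) in *; clearbody e
  end.

Lemma cosh_pos z : 0 < cosh z.
Proof. unfold cosh. pose proof (exp_pos z). pose proof (exp_pos (- z)). lra. Qed.

Lemma sinh_pos z : 0 < z -> 0 < sinh z.
Proof. intro Hz. rewrite <- sinh_0. now apply sinh_lt. Qed.

Lemma is_derive_sinh_mul m c : is_derive (fun s => sinh (m * s)) c (m * cosh (m * c)).
Proof. unfold sinh, cosh. auto_derive; auto. R_eq. field. Qed.

Lemma is_derive_cosh_mul m c : is_derive (fun s => cosh (m * s)) c (m * sinh (m * c)).
Proof. unfold sinh, cosh. auto_derive; auto. R_eq. field. Qed.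

Lemma wronskian_sinh_zero (m a : R) (D D' : R -> R) :
  (forall t, 0 <= t <= a -> is_derive D t (D' t)) ->
  (forall t, 0 <= t <= a -> is_derive D' t (m ^ 2 * D t)) -> D 0 = 0 ->
  forall t, 0 <= t <= a -> D' t * sinh (m * t) - m * D t * cosh (m * t) = 0.
Proof.
  intros HD HD' HD0 t Ht.
  rewrite (is_derive_eq_0_const (fun s => D' s * sinh (m * s) - m * D s * cosh (m * s))
    (fun s => m ^ 2 * D s * sinh (m * s) + D' s * (m * cosh (m * s))
              - m * (D' s * cosh (m * s) + D s * (m * sinh (m * s)))) 0 t (proj1 Ht)).
  - rewrite Rmult_0_r, HD0, sinh_0. ring.
  - intros c Hc.
    apply (is_derive_minus (fun s => D' s * sinh (m * s)) (fun s => m * D s * cosh (m * s))).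
    + apply (is_derive_mult D' (fun s => sinh (m * s)));
        [apply HD'; lra | apply is_derive_sinh_mul |].
      intros; apply Rmult_comm.
    + apply is_derive_ext with (fun s => m * (D s * cosh (m * s))); [intro; R_eq; ring|].
      apply (is_derive_scal (fun s => D s * cosh (m * s))).
      apply (is_derive_mult D (fun s => cosh (m * s)));
        [apply HD; lra | apply is_derive_cosh_mul |].
      intros; apply Rmult_comm.
  - intros c Hc. R_eq. ring.
Qed.

Lemma ode_sqr_Dirichlet_zero (m a : R) (D D' : R -> R) :
  0 < m ->
  (forall t, 0 <= t <= a -> is_derive D t (D' t)) ->
  (forall t, 0 <= t <= a -> is_derive D' t (m ^ 2 * D t)) ->
  D 0 = 0 -> D a = 0 -> forall t, 0 <= t <= a -> D t = 0.
Proof.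
  intros Hm HD HD' HD0 HDa t Ht.
  destruct (Req_dec t 0) as [->|Ht0]; [exact HD0|].
  assert (Hsinh : forall s, t <= s -> 0 < sinh (m * s)) by (intros; apply sinh_pos; nra).
  (* The Wronskian vanishes, so [D / sinh (m .)] is constant on [[t, a]]. *)
  assert (E : D a / sinh (m * a) = D t / sinh (m * t)).
  { apply (is_derive_eq_0_const (fun s => D s / sinh (m * s))
      (fun s => (D' s * sinh (m * s) - D s * (m * cosh (m * s))) / sinh (m * s) ^ 2)
      t a (proj2 Ht)).
    - intros c Hc.
      apply (is_derive_div D (fun s => sinh (m * s))); [apply HD; lra | apply is_derive_sinh_mul |].
      apply Rgt_not_eq, Hsinh. lra.
    - intros c Hc. pose proof (wronskian_sinh_zero m a D D' HD HD' HD0 c ltac:(lra)).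
      replace (D' c * sinh (m * c) - D c * (m * cosh (m * c))) with 0 by lra.
      unfold Rdiv. R_eq. ring. }
  rewrite HDa in E. assert (Hst := Hsinh t (Rle_refl t)).
  apply (Rmult_eq_reg_r (/ sinh (m * t))); [|apply Rinv_neq_0_compat; lra].
  rewrite Rmult_0_l. unfold Rdiv in E. rewrite <- E. ring.
Qed.

Definition mode_profile (m t : R) : R :=
  PI / (4 * m ^ 2) * (1 - cosh (m * (t - PI/2)) / cosh (m * PI / 2)).

Definition mode_profile_deriv (m t : R) : R :=
  PI / (4 * m) * sinh (m * (PI/2 - t)) / cosh (m * PI / 2).

Lemma is_derive_mode_profile m t : 0 < m -> is_derive (mode_profile m) t (mode_profile_deriv m t).
Proof.
  intro Hm. unfold mode_profile, mode_profile_deriv. pose proof (cosh_pos (m * PI / 2)).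
  unfold cosh, sinh in *. auto_derive; [repeat split; apply Rgt_not_eq; nra|].
  R_eq. unfold Rminus. replace (m * (PI / 2 + - t)) with (- (m * (t + - (PI / 2)))) by ring.
  rewrite !Ropp_involutive. generalize_exp. field. lra.
Qed.

Lemma is_derive_mode_profile_deriv m t : 0 < m ->
  is_derive (mode_profile_deriv m) t (m ^ 2 * mode_profile m t - PI/4).
Proof.
  intro Hm. unfold mode_profile, mode_profile_deriv. pose proof (cosh_pos (m * PI / 2)).
  unfold cosh, sinh in *. auto_derive; [repeat split; apply Rgt_not_eq; nra|].
  R_eq. unfold Rminus. replace (m * (PI / 2 + - t)) with (- (m * (t + - (PI / 2)))) by ring.
  rewrite !Ropp_involutive. generalize_exp. field. lra.
Qed.

Lemma mode_profile_0 m : 0 < m -> mode_profile m 0 = 0.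
Proof.
  intro Hm. unfold mode_profile. pose proof (cosh_pos (m * PI / 2)).
  replace (m * (0 - PI/2)) with (- (m * PI / 2)) by field.
  unfold cosh in *. rewrite Ropp_involutive. field. split; apply Rgt_not_eq; nra.
Qed.

Lemma mode_profile_PI m : 0 < m -> mode_profile m PI = 0.
Proof.
  intro Hm. unfold mode_profile. pose proof (cosh_pos (m * PI / 2)).
  replace (m * (PI - PI/2)) with (m * PI / 2) by field.
  field. split; apply Rgt_not_eq; nra.
Qed.

Lemma sin_series_inv_oddR_pow_shift m t : 0 < m -> 0 <= t <= PI ->
  sin_series (inv_oddR_pow_shift m 1) t = mode_profile m t.
Proof.
  intros Hm Ht.
  set (Q := sin_series (inv_oddR_pow_shift m 3)).
  (* With [P3 t = PI/8 t (PI - t)], [D = m^2 Q - P3 + mode_profile m] satisfies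
     [D'' = m^2 D] and vanishes at [0] and [PI]. *)
  set (D := fun s => m ^ 2 * Q s - PI/8 * s * (PI - s) + mode_profile m s).
  assert (HD0 : forall s, 0 <= s <= PI -> D s = 0).
  { apply (ode_sqr_Dirichlet_zero m PI D
      (fun s => m ^ 2 * cos_series (inv_oddR_pow_shift m 2) s - PI/8 * (PI - 2 * s)
                + mode_profile_deriv m s)); [exact Hm | | | |].
    - intros s _. unfold D.
      apply (is_derive_plus (fun s => m ^ 2 * Q s - PI/8 * s * (PI - s)));
        [apply (is_derive_minus (fun s => m ^ 2 * Q s)) | now apply is_derive_mode_profile].
      + apply (is_derive_scal Q). unfold Q.
        apply is_derive_sin_series;
          auto using oddR_mul_inv_oddR_pow_shift, inv_sq_bounded_inv_oddR_pow_shift.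
      + auto_derive; auto. ring.
    - intros s Hs.
      replace (m ^ 2 * D s) with
        (m ^ 2 * - sin_series (inv_oddR_pow_shift m 1) s - PI/8 * (-2)
         + (m ^ 2 * mode_profile m s - PI/4)).
      + apply (is_derive_plus
                 (fun s => m ^ 2 * cos_series (inv_oddR_pow_shift m 2) s - PI/8 * (PI - 2 * s)));
          [apply (is_derive_minus (fun s => m ^ 2 * cos_series (inv_oddR_pow_shift m 2) s)) |
           now apply is_derive_mode_profile_deriv].
        * apply (is_derive_scal (cos_series (inv_oddR_pow_shift m 2))).
          apply is_derive_cos_series;
            auto using oddR_mul_inv_oddR_pow_shift, inv_sq_bounded_inv_oddR_pow_shift.
        * auto_derive; auto. ring.
      + unfold D, Q. rewrite sin_series_partial_fraction, sin_series_inv_oddR_cube by exact Hs.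
        R_eq. field.
    - unfold D, Q. rewrite sin_series_0, mode_profile_0 by exact Hm. ring.
    - unfold D, Q. rewrite sin_series_PI, mode_profile_PI by exact Hm. ring. }
  specialize (HD0 t Ht). unfold D in HD0.
  rewrite sin_series_partial_fraction, sin_series_inv_oddR_cube by exact Ht. fold Q. lra.
Qed.

(** * Fourier coefficients of [f0] *)

Definition sgn_sin_integral (b : R) : R := if Req_EM_T b 0 then 0 else 2 * (1 - cos (b / 2)) / b.

Lemma is_RInt_sgn_mul (g G : R -> R) :
  (forall t, is_derive G t (g t)) -> (forall t, continuous g t) ->
  is_RInt (fun y => sgn y * g y) (-1/2) (1/2) ((G (1/2) - G 0) - (G 0 - G (-1/2))).
Proof.
  intros Hd Hc.
  replace ((G (1/2) - G 0) - (G 0 - G (-1/2))) with (plus (- G 0 - - G (-1/2)) (G (1/2) - G 0))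
    by (change plus with Rplus; R_eq; ring).
  apply (@is_RInt_Chasles R_NormedModule) with 0.
  - apply is_RInt_ext with (fun y => - g y).
    + intros y Hy. rewrite Rmin_left, Rmax_right in Hy by lra.
      unfold sgn. destruct (Rlt_dec 0 y); [lra|]. R_eq. ring.
    + apply (is_RInt_derive (V := R_CompleteNormedModule) (fun y => - G y)).
      * intros. now apply (is_derive_opp G).
      * intros. now apply (continuous_opp g).
  - apply is_RInt_ext with g.
    + intros y Hy. rewrite Rmin_left, Rmax_right in Hy by lra.
      unfold sgn. destruct (Rlt_dec 0 y); [|lra]. R_eq. ring.
    + apply (is_RInt_derive (V := R_CompleteNormedModule) G g); auto.
Qed.

Lemma is_RInt_sgn_cos a b :
  is_RInt (fun y => sgn y * cos (a + b * y)) (-1/2) (1/2) (- sin a * sgn_sin_integral b).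
Proof.
  unfold sgn_sin_integral. destruct (Req_EM_T b 0) as [->|Hb].
  - apply is_RInt_ext with (fun y => sgn y * cos a).
    { intros. now rewrite Rmult_0_l, Rplus_0_r. }
    replace (- sin a * 0) with ((1/2 * cos a - 0 * cos a) - (0 * cos a - (-1/2) * cos a)) by field.
    apply (is_RInt_sgn_mul (fun _ => cos a) (fun y => y * cos a)).
    + intro; auto_derive; auto. R_eq; ring.
    + intro; apply continuous_const.
  - replace (- sin a * (2 * (1 - cos (b / 2)) / b)) with
      ((sin (a + b * (1/2)) / b - sin (a + b * 0) / b)
       - (sin (a + b * 0) / b - sin (a + b * (-1/2)) / b)).
    + apply (is_RInt_sgn_mul (fun y => cos (a + b * y)) (fun y => sin (a + b * y) / b)).
      * intro; auto_derive; auto. R_eq; field; auto.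
      * intro; apply (ex_derive_continuous (V := R_NormedModule)); auto_derive; auto.
    + replace (a + b * (1/2)) with (a + b/2) by field.
      replace (a + b * (-1/2)) with (a - b/2) by field.
      rewrite Rmult_0_r, Rplus_0_r, sin_plus, sin_minus. field. auto.
Qed.

Lemma is_RInt_sgn_sin a b :
  is_RInt (fun y => sgn y * sin (a + b * y)) (-1/2) (1/2) (cos a * sgn_sin_integral b).
Proof.
  unfold sgn_sin_integral. destruct (Req_EM_T b 0) as [->|Hb].
  - apply is_RInt_ext with (fun y => sgn y * sin a).
    { intros. now rewrite Rmult_0_l, Rplus_0_r. }
    replace (cos a * 0) with ((1/2 * sin a - 0 * sin a) - (0 * sin a - (-1/2) * sin a)) by field.
    apply (is_RInt_sgn_mul (fun _ => sin a) (fun y => y * sin a)).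
    + intro; auto_derive; auto. R_eq; ring.
    + intro; apply continuous_const.
  - replace (cos a * (2 * (1 - cos (b / 2)) / b)) with
      ((- cos (a + b * (1/2)) / b - - cos (a + b * 0) / b)
       - (- cos (a + b * 0) / b - - cos (a + b * (-1/2)) / b)).
    + apply (is_RInt_sgn_mul (fun y => sin (a + b * y)) (fun y => - cos (a + b * y) / b)).
      * intro; auto_derive; auto. R_eq; field; auto.
      * intro; apply (ex_derive_continuous (V := R_NormedModule)); auto_derive; auto.
    + replace (a + b * (1/2)) with (a + b/2) by field.
      replace (a + b * (-1/2)) with (a - b/2) by field.
      rewrite Rmult_0_r, Rplus_0_r, cos_plus, cos_minus. field. auto.
Qed.

Lemma fcos_f0 m n :
  fcos f0 m n = - (sgn_sin_integral (2 * PI * IZR n) * sgn_sin_integral (2 * PI * IZR m)).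
Proof.
  unfold fcos. apply is_RInt_unique.
  set (b := 2 * PI * IZR n). set (c := 2 * PI * IZR m).
  apply is_RInt_ext with (fun x => - sgn_sin_integral b * (sgn x * sin (0 + c * x))).
  { intros x _. symmetry. apply is_RInt_unique.
    replace (- sgn_sin_integral b * (sgn x * sin (0 + c * x)))
      with (sgn x * (- sin (c * x) * sgn_sin_integral b)) by (rewrite Rplus_0_l; ring).
    apply is_RInt_ext with (fun y => sgn x * (sgn y * cos (c * x + b * y))).
    { intros y _. unfold f0, phase.
      replace (2 * PI * (IZR m * x + IZR n * y)) with (c * x + b * y) by (unfold b, c; ring).
      R_eq. ring. }
    apply (is_RInt_scal (V := R_NormedModule)), is_RInt_sgn_cos. }
  replace (- (sgn_sin_integral b * sgn_sin_integral c))
    with (- sgn_sin_integral b * (cos 0 * sgn_sin_integral c)) by (rewrite cos_0; ring).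
  apply (is_RInt_scal (V := R_NormedModule)), is_RInt_sgn_sin.
Qed.

Lemma fsin_f0 m n : fsin f0 m n = 0.
Proof.
  unfold fsin. apply is_RInt_unique.
  set (b := 2 * PI * IZR n). set (c := 2 * PI * IZR m).
  apply is_RInt_ext with (fun x => sgn_sin_integral b * (sgn x * cos (0 + c * x))).
  { intros x _. symmetry. apply is_RInt_unique.
    replace (sgn_sin_integral b * (sgn x * cos (0 + c * x)))
      with (sgn x * (cos (c * x) * sgn_sin_integral b)) by (rewrite Rplus_0_l; ring).
    apply is_RInt_ext with (fun y => sgn x * (sgn y * sin (c * x + b * y))).
    { intros y _. unfold f0, phase.
      replace (2 * PI * (IZR m * x + IZR n * y)) with (c * x + b * y) by (unfold b, c; ring).
      R_eq. ring. }
    apply (is_RInt_scal (V := R_NormedModule)), is_RInt_sgn_sin. }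
  set (F := fun x => sgn_sin_integral b * (sgn x * cos (0 + c * x))).
  replace 0 with (sgn_sin_integral b * (- sin 0 * sgn_sin_integral c)) by (rewrite sin_0; ring).
  apply (is_RInt_scal (V := R_NormedModule)), is_RInt_sgn_cos.
Qed.

Lemma sgn_sin_integral_0 : sgn_sin_integral 0 = 0.
Proof. unfold sgn_sin_integral. destruct (Req_EM_T 0 0); [reflexivity | lra]. Qed.

Lemma sgn_sin_integral_opp b : sgn_sin_integral (- b) = - sgn_sin_integral b.
Proof.
  unfold sgn_sin_integral. destruct (Req_EM_T (- b) 0), (Req_EM_T b 0); try lra.
  replace (- b / 2) with (- (b / 2)) by field. rewrite cos_neg. field. auto.
Qed.

(** * The square partial sums as a sine double series *)

Lemma sum_f_R0_centered (g : R -> R) N :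
  sum_f_R0 (fun i => g (INR i - INR N)) (2 * N) = sum_n (fun k => g (INR k) + g (- INR k)) N - g 0.
Proof.
  induction N.
  - simpl. rewrite sum_n_0. simpl. rewrite Ropp_0, Rminus_0_r. R_eq. ring.
  - replace (2 * S N)%nat with (S (S (2 * N))) by lia.
    rewrite tech5, decomp_sum, Nat.pred_succ by lia.
    rewrite (sum_eq _ (fun i => g (INR i - INR N))).
    2:{ intros i _. f_equal. rewrite !S_INR. ring. }
    rewrite IHN, sum_n_S.
    replace (INR (S (S (2 * N))) - INR (S N)) with (INR (S N))
      by (rewrite !S_INR, mult_INR; simpl; ring).
    replace (INR 0 - INR (S N)) with (- INR (S N)) by (simpl; ring).
    R_eq. ring.
Qed.

Section SquarePartialSums.
Variables x y : R.

Definition f0_mode (p q : R) : R :=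
  sgn_sin_integral (2 * PI * q) * sgn_sin_integral (2 * PI * p)
  * cos (2 * PI * (p * x + q * y)) / (4 * PI ^ 2 * (p ^ 2 + q ^ 2)).

Definition sine_mode (i j : nat) : R :=
  sgn_sin_integral (2 * PI * INR i) * sgn_sin_integral (2 * PI * INR j)
  * sin (2 * PI * INR i * x) * sin (2 * PI * INR j * y) / (PI ^ 2 * (INR i ^ 2 + INR j ^ 2)).

Lemma invlap_term_f0 m n : invlap_term f0 m n x y = f0_mode (IZR m) (IZR n).
Proof.
  unfold invlap_term, f0_mode. destruct (Z.eqb m 0 && Z.eqb n 0)%bool eqn:E.
  - apply andb_prop in E. destruct E as [E1 E2]. apply Z.eqb_eq in E1, E2. subst.
    rewrite Rmult_0_r, sgn_sin_integral_0. unfold Rdiv. ring.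
  - rewrite fcos_f0, fsin_f0. unfold phase, Rdiv. ring.
Qed.

Lemma f0_mode_0_l q : f0_mode 0 q = 0.
Proof. unfold f0_mode. rewrite Rmult_0_r, sgn_sin_integral_0. unfold Rdiv. ring. Qed.

Lemma f0_mode_0_r p : f0_mode p 0 = 0.
Proof. unfold f0_mode. rewrite Rmult_0_r, sgn_sin_integral_0. unfold Rdiv. ring. Qed.

(* As [sgn_sin_integral] is odd, the four sign choices [(+-p, +-q)] combine the
   cosines [cos (+-a +- b)] into [- 4 sin a sin b]. *)
Lemma f0_mode_sign_sum p q :
  f0_mode p q + f0_mode p (- q) + (f0_mode (- p) q + f0_mode (- p) (- q)) =
  - (sgn_sin_integral (2 * PI * p) * sgn_sin_integral (2 * PI * q)
     * sin (2 * PI * p * x) * sin (2 * PI * q * y) / (PI ^ 2 * (p ^ 2 + q ^ 2))).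
Proof.
  unfold f0_mode.
  replace (2 * PI * - q) with (- (2 * PI * q)) by ring.
  replace (2 * PI * - p) with (- (2 * PI * p)) by ring.
  rewrite !sgn_sin_integral_opp.
  replace ((- p) ^ 2) with (p ^ 2) by ring. replace ((- q) ^ 2) with (q ^ 2) by ring.
  replace (2 * PI * (p * x + q * y)) with (2 * PI * p * x + 2 * PI * q * y) by ring.
  replace (2 * PI * (p * x + - q * y)) with (2 * PI * p * x - 2 * PI * q * y) by ring.
  replace (2 * PI * (- p * x + q * y)) with (- (2 * PI * p * x - 2 * PI * q * y)) by ring.
  replace (2 * PI * (- p * x + - q * y)) with (- (2 * PI * p * x + 2 * PI * q * y)) by ring.
  rewrite !cos_neg, cos_plus, cos_minus. unfold Rdiv.
  replace (/ (PI ^ 2 * (p ^ 2 + q ^ 2))) with (4 * / (4 * PI ^ 2 * (p ^ 2 + q ^ 2))).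
  - ring.
  - destruct (Req_dec (p ^ 2 + q ^ 2) 0) as [Hz|Hz].
    + rewrite Hz, !Rmult_0_r, Rinv_0. ring.
    + pose proof PI_RGT_0. field. split; [exact Hz | apply Rgt_not_eq; lra].
Qed.

Lemma invlap_partial_f0 N :
  invlap_partial f0 N x y = - sum_n (fun i => sum_n (fun j => sine_mode i j) N) N.
Proof.
  unfold invlap_partial.
  rewrite (sum_eq _ (fun i => sum_f_R0 (fun j => f0_mode (INR i - INR N) (INR j - INR N)) (2 * N))).
  2:{ intros i _. apply sum_eq. intros j _.
      rewrite invlap_term_f0, !minus_IZR, <- !INR_IZR_INZ. reflexivity. }
  rewrite (sum_eq _ (fun i => sum_n (fun k => f0_mode (INR i - INR N) (INR k)
                                             + f0_mode (INR i - INR N) (- INR k)) N)).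
  2:{ intros i _. rewrite (sum_f_R0_centered (fun q => f0_mode (INR i - INR N) q)), f0_mode_0_r.
      R_eq. ring. }
  rewrite (sum_f_R0_centered (fun p => sum_n (fun k => f0_mode p (INR k) + f0_mode p (- INR k)) N)).
  rewrite (sum_n_ext_R (fun k => f0_mode 0 (INR k) + f0_mode 0 (- INR k)) (fun k => 0 * 0))
    by (intro; rewrite !f0_mode_0_l; ring).
  rewrite sum_n_scal_R, Rmult_0_l, Rminus_0_r, <- sum_n_opp_R.
  apply sum_n_ext_R. intro i.
  rewrite <- sum_n_plus_R, <- sum_n_opp_R. apply sum_n_ext_R. intro j.
  now rewrite f0_mode_sign_sum.
Qed.

End SquarePartialSums.

Section DominatedDoubleSeries.
Variables (a : nat -> nat -> R) (b : nat -> R).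
Hypotheses (Hb : forall i, 0 <= b i) (Hab : forall i j, Rabs (a i j) <= b i * b j)
  (Hex : ex_series b).

Lemma Rabs_Series_row_sub_le i N :
  Rabs (Series (a i) - sum_n (a i) N) <= b i * (Series b - sum_n b N).
Proof.
  eapply Rle_trans;
    [apply (Rabs_Series_tail_le (a i) (fun j => b i * b j)); auto using ex_series_scal_R|].
  rewrite Series_scal_l, sum_n_scal_R. right. ring.
Qed.

Lemma Rabs_Series_row_le i : Rabs (Series (a i)) <= b i * Series b.
Proof.
  pose proof (Rabs_Series_row_sub_le i 0) as H. rewrite !sum_n_0 in H.
  pose proof (Hab i 0%nat). pose proof (Hb i).
  pose proof (Rabs_triang (Series (a i) - a i 0%nat) (a i 0%nat)) as Htri.
  replace (Series (a i) - a i 0%nat + a i 0%nat) with (Series (a i)) in Htri by ring.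
  nra.
Qed.

Lemma ex_series_Series_row : ex_series (fun i => Series (a i)).
Proof.
  apply ex_series_le_R with (fun i => Series b * b i); [|now apply ex_series_scal_R].
  intro i. rewrite Rmult_comm. apply Rabs_Series_row_le.
Qed.

Lemma is_lim_seq_square_sum :
  is_lim_seq (fun N => sum_n (fun i => sum_n (a i) N) N) (Series (fun i => Series (a i))).
Proof.
  set (B := Series b). set (F := fun i => Series (a i)).
  assert (Herr : forall N, Rabs (sum_n F N - sum_n (fun i => sum_n (a i) N) N)
                           <= (B - sum_n b N) * B).
  { intro N. rewrite <- sum_n_minus_R. eapply Rle_trans; [apply Rabs_sum_n_le|].
    eapply Rle_trans.
    - apply (sum_n_le_R _ (fun i => (B - sum_n b N) * b i)).
      intro i. rewrite Rmult_comm. apply Rabs_Series_row_sub_le.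
    - rewrite sum_n_scal_R. apply Rmult_le_compat_l; [now apply Series_tail_nonneg|].
      pose proof (Series_tail_nonneg b N Hb Hex). fold B in H. lra. }
  assert (HF : is_lim_seq (sum_n F) (Series F)) by apply Series_correct, ex_series_Series_row.
  assert (Htail : is_lim_seq (fun N => (B - sum_n b N) * B) (0 * B))
    by (apply is_lim_seq_mult'; [now apply is_lim_seq_Series_tail | apply is_lim_seq_const]).
  rewrite Rmult_0_l in Htail.
  apply is_lim_seq_le_le with (u := fun N => sum_n F N - (B - sum_n b N) * B)
                              (w := fun N => sum_n F N + (B - sum_n b N) * B).
  - intro N. specialize (Herr N). apply Rabs_le_between in Herr. lra.
  - replace (Series F) with (Series F - 0) by ring. now apply is_lim_seq_minus'.
  - replace (Series F) with (Series F + 0) by ring. now apply is_lim_seq_plus'.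
Qed.

End DominatedDoubleSeries.

Lemma sgn_sin_integral_INR i : (1 <= i)%nat ->
  sgn_sin_integral (2 * PI * INR i) = (1 - cos (INR i * PI)) / (PI * INR i).
Proof.
  intro Hi. unfold sgn_sin_integral. pose proof PI_RGT_0.
  assert (0 < INR i) by (apply lt_0_INR; lia).
  destruct (Req_EM_T (2 * PI * INR i) 0); [nra|].
  replace (2 * PI * INR i / 2) with (INR i * PI) by field. field. lra.
Qed.

Lemma sgn_sin_integral_even k : sgn_sin_integral (2 * PI * INR (2 * k)) = 0.
Proof.
  destruct k as [|k]; [simpl; rewrite Rmult_0_r; apply sgn_sin_integral_0|].
  rewrite sgn_sin_integral_INR by lia.
  replace (INR (2 * S k) * PI) with (0 + 2 * INR (S k) * PI) by (rewrite mult_INR; simpl; ring).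
  rewrite cos_period, cos_0. unfold Rdiv. ring.
Qed.

Lemma sgn_sin_integral_odd k : sgn_sin_integral (2 * PI * INR (2 * k + 1)) = 2 / (PI * oddR k).
Proof.
  rewrite sgn_sin_integral_INR by lia.
  rewrite <- oddR_INR, cos_oddR_PI. pose proof PI_RGT_0. pose proof (oddR_ge_1 k). field. lra.
Qed.

Lemma Rabs_sgn_sin_integral_le i :
  (1 <= i)%nat -> Rabs (sgn_sin_integral (2 * PI * INR i)) <= / INR i.
Proof.
  intro Hi. rewrite sgn_sin_integral_INR by exact Hi.
  assert (HI : 1 <= INR i) by (apply (le_INR 1); lia).
  pose proof PI2_3_2. pose proof (COS_bound (INR i * PI)).
  rewrite Rabs_div, Rabs_pos_eq, (Rabs_pos_eq (PI * INR i)) by nra.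
  unfold Rdiv. apply Rle_trans with (2 * / (PI * INR i)).
  - apply Rmult_le_compat_r; [apply Rlt_le, Rinv_0_lt_compat|]; nra.
  - rewrite Rinv_mult. rewrite <- Rmult_assoc. rewrite <- (Rmult_1_l (/ INR i)) at 2.
    apply Rmult_le_compat_r; [apply Rlt_le, Rinv_0_lt_compat; lra|].
    apply (Rmult_le_reg_r PI); [lra|]. field_simplify; lra.
Qed.

Definition mode_weight (i : nat) : R := 3 * inv_succ_succ i.

Lemma mode_weight_nonneg i : 0 <= mode_weight i.
Proof.
  unfold mode_weight, inv_succ_succ. pose proof (pos_INR i).
  apply Rmult_le_pos; [lra|]. apply Rlt_le, Rdiv_lt_0_compat; nra.
Qed.

Lemma ex_series_mode_weight : ex_series mode_weight.
Proof. apply ex_series_scal_R, ex_series_inv_succ_succ. Qed.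

Lemma inv_INR_sq_le_mode_weight i : (1 <= i)%nat -> / INR i ^ 2 <= mode_weight i.
Proof.
  intro Hi. assert (HI : 1 <= INR i) by (apply (le_INR 1); lia).
  unfold mode_weight, inv_succ_succ.
  replace (3 * (2 / ((INR i + 1) * (INR i + 2)))) with (/ (((INR i + 1) * (INR i + 2)) / 6))
    by (field; nra).
  apply Rinv_le_contravar; nra.
Qed.

Lemma Rabs_sine_mode_le x y i j : Rabs (sine_mode x y i j) <= mode_weight i * mode_weight j.
Proof.
  pose proof (mode_weight_nonneg i). pose proof (mode_weight_nonneg j).
  destruct (Nat.eq_dec i 0) as [->|Hi].
  { unfold sine_mode. simpl. rewrite Rmult_0_r, sgn_sin_integral_0.
    unfold Rdiv. rewrite !Rmult_0_l, Rabs_R0. nra. }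
  destruct (Nat.eq_dec j 0) as [->|Hj].
  { unfold sine_mode. simpl. rewrite Rmult_0_r, sgn_sin_integral_0.
    unfold Rdiv. rewrite Rmult_0_r, !Rmult_0_l, Rabs_R0. nra. }
  assert (HI : 1 <= INR i) by (apply (le_INR 1); lia).
  assert (HJ : 1 <= INR j) by (apply (le_INR 1); lia).
  apply Rle_trans with (/ INR i ^ 2 * / INR j ^ 2).
  2:{ apply Rmult_le_compat; try (apply inv_INR_sq_le_mode_weight; lia);
      apply Rlt_le, Rinv_0_lt_compat; nra. }
  pose proof PI2_3_2.
  assert (HPIij : INR i * INR j <= PI ^ 2 * (INR i ^ 2 + INR j ^ 2)).
  { pose proof (pow2_ge_0 (INR i - INR j)). assert (1 <= PI ^ 2) by nra. nra. }
  pose proof (Rabs_sgn_sin_integral_le i ltac:(lia)).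
  pose proof (Rabs_sgn_sin_integral_le j ltac:(lia)).
  unfold sine_mode. rewrite Rabs_div, (Rabs_pos_eq (PI ^ 2 * _)), !Rabs_mult by nra.
  apply Rle_trans with (/ INR i * / INR j * 1 * 1 / (INR i * INR j)).
  - unfold Rdiv. apply Rmult_le_compat.
    + repeat apply Rmult_le_pos; apply Rabs_pos.
    + apply Rlt_le, Rinv_0_lt_compat. nra.
    + repeat apply Rmult_le_compat; auto using Rabs_pos, Rabs_sin_le_1;
        repeat apply Rmult_le_pos; apply Rabs_pos.
    + apply Rinv_le_contravar; nra.
  - right. field. lra.
Qed.

Lemma psi0_iterated_series x y : psi0 x y = - Series (fun i => Series (sine_mode x y i)).
Proof.
  unfold psi0, invlap.
  rewrite (Lim_seq_ext _ (fun N => - sum_n (fun i => sum_n (sine_mode x y i) N) N))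
    by (intro; apply invlap_partial_f0).
  rewrite (is_lim_seq_unique _ (- Series (fun i => Series (sine_mode x y i)))); [reflexivity|].
  apply (is_lim_seq_opp _ (Series (fun i => Series (sine_mode x y i)))).
  apply is_lim_seq_square_sum with mode_weight;
    auto using mode_weight_nonneg, Rabs_sine_mode_le, ex_series_mode_weight.
Qed.

Lemma sum_n_odd_terms (c : nat -> R) K : (forall k, c (2 * k)%nat = 0) ->
  sum_n c (2 * K + 1) = sum_n (fun k => c (2 * k + 1)%nat) K.
Proof.
  intro Heven. induction K.
  - simpl. rewrite sum_n_S, !sum_n_0. specialize (Heven 0%nat). simpl in Heven.
    rewrite Heven. simpl. R_eq. ring.
  - replace (2 * S K + 1)%nat with (S (S (2 * K + 1))) by lia.
    rewrite !sum_n_S, IHK. replace (S (2 * K + 1)) with (2 * S K)%nat by lia.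
    rewrite Heven. replace (S (2 * S K)) with (2 * S K + 1)%nat by lia. R_eq. ring.
Qed.

Lemma is_series_odd_terms (c : nat -> R) l : (forall k, c (2 * k)%nat = 0) ->
  (is_series c l <-> is_series (fun k => c (2 * k + 1)%nat) l).
Proof.
  intro Heven.
  change (is_lim_seq (sum_n c) l <-> is_lim_seq (sum_n (fun k => c (2 * k + 1)%nat)) l).
  rewrite !is_lim_seq_Reals. split.
  - intros Hc eps Heps. destruct (Hc eps Heps) as [N HN]. exists N. intros n Hn.
    rewrite <- sum_n_odd_terms by auto. apply HN. lia.
  - intros Hc eps Heps. destruct (Hc eps Heps) as [N HN]. exists (2 * N + 1)%nat. intros n Hn.
    destruct (Nat.Even_or_Odd n) as [[p ->]|[p ->]].
    + destruct p as [|p]; [lia|].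
      replace (2 * S p)%nat with (S (2 * p + 1)) by lia. rewrite sum_n_S.
      replace (S (2 * p + 1)) with (2 * S p)%nat by lia. rewrite Heven, Rplus_0_r.
      rewrite sum_n_odd_terms by auto. apply HN. lia.
    + rewrite sum_n_odd_terms by auto. apply HN. lia.
Qed.

Lemma sine_mode_even_l x y k j : sine_mode x y (2 * k) j = 0.
Proof. unfold sine_mode. rewrite sgn_sin_integral_even. unfold Rdiv. ring. Qed.

Lemma sine_mode_even_r x y i k : sine_mode x y i (2 * k) = 0.
Proof. unfold sine_mode. rewrite sgn_sin_integral_even. unfold Rdiv. ring. Qed.

Lemma is_series_sine_mode_row x y k : 0 <= 2 * PI * y <= PI ->
  is_series (sine_mode x y (2 * k + 1))
    (4 / (PI ^ 4 * oddR k) * sin (oddR k * (2 * PI * x)) * mode_profile (oddR k) (2 * PI * y)).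
Proof.
  intro Hy. pose proof (oddR_ge_1 k). pose proof PI_RGT_0.
  apply is_series_odd_terms; [apply sine_mode_even_r|].
  rewrite <- sin_series_inv_oddR_pow_shift by (auto; lra).
  set (c := 4 / (PI ^ 4 * oddR k) * sin (oddR k * (2 * PI * x))).
  apply is_series_ext
    with (fun l => c * (sin (oddR l * (2 * PI * y)) * inv_oddR_pow_shift (oddR k) 1 l)).
  - intro l. pose proof (oddR_ge_1 l).
    unfold c, sine_mode, inv_oddR_pow_shift.
    rewrite !sgn_sin_integral_odd, <- !oddR_INR.
    replace (2 * PI * oddR k * x) with (oddR k * (2 * PI * x)) by ring.
    replace (2 * PI * oddR l * y) with (oddR l * (2 * PI * y)) by ring.
    R_eq. field. repeat split; nra.
  - apply (is_series_scal_l (V := R_NormedModule)), Series_correct.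
    apply ex_series_sin_series, inv_sq_bounded_inv_oddR_pow_shift.
Qed.

Lemma is_series_psi0 x y : 0 <= y <= 1/2 ->
  is_series (fun k => 4 / (PI ^ 4 * oddR k) * sin (oddR k * (2 * PI * x))
                      * mode_profile (oddR k) (2 * PI * y))
            (- psi0 x y).
Proof.
  intro Hy. pose proof PI_RGT_0.
  rewrite psi0_iterated_series, Ropp_involutive.
  assert (HF := Series_correct _ (ex_series_Series_row (sine_mode x y) mode_weight
                  mode_weight_nonneg (Rabs_sine_mode_le x y) ex_series_mode_weight)).
  apply is_series_odd_terms in HF; [|intro k; apply Series_eq_0, sine_mode_even_l].
  apply (is_series_ext _ _ _
           (fun k => is_series_unique _ _ (is_series_sine_mode_row x y k ltac:(nra)))), HF.
Qed.

(** * Monotonicity in the second variable *)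

Lemma sinh_add z v : sinh (z + v) = sinh z * cosh v + cosh z * sinh v.
Proof. unfold sinh, cosh. rewrite Ropp_plus_distr, !exp_plus. field. Qed.

Lemma exp_opp_mul_exp z : exp (- z) * exp z = 1.
Proof. rewrite <- exp_plus, Rplus_opp_l. apply exp_0. Qed.

Lemma cosh_le_sinh_mul z : 0 < z -> cosh z <= sinh z * (1 + / z).
Proof.
  intro Hz. unfold sinh, cosh.
  assert (E := exp_opp_mul_exp z).
  assert (H2 : 1 + 2 * z <= exp z * exp z)
    by (rewrite <- exp_plus; replace (z + z) with (2 * z) by ring; apply exp_ineq1_le).
  pose proof (exp_pos z). pose proof (exp_pos (- z)).
  set (a := exp z) in *. set (c := exp (- z)) in *.
  apply (Rmult_le_reg_r (2 * z * a)); [nra|].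
  replace ((a + c) / 2 * (2 * z * a)) with (z * (a * a) + z * (c * a)) by field.
  replace ((a - c) / 2 * (1 + / z) * (2 * z * a)) with ((z + 1) * (a * a) - (z + 1) * (c * a))
    by (field; lra).
  rewrite E. nra.
Qed.

Lemma sinh_le_mul_exp v : 0 <= v -> sinh v <= v * exp v.
Proof.
  intro Hv. unfold sinh.
  assert (E := exp_opp_mul_exp v).
  assert (H2 : 1 - 2 * v <= exp (- v) * exp (- v))
    by (rewrite <- exp_plus; replace (- v + - v) with (- (2 * v)) by ring; apply exp_ineq1_le).
  pose proof (exp_pos v). pose proof (exp_pos (- v)).
  set (a := exp v) in *. set (c := exp (- v)) in *.
  assert (a * a * (c * c) = 1) by (replace (a * a * (c * c)) with ((c * a) * (c * a)) by ring;
                                   rewrite E; ring).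
  apply (Rmult_le_reg_r (2 * a)); [lra|].
  replace ((a - c) / 2 * (2 * a)) with (a * a - c * a) by field.
  rewrite E. nra.
Qed.

Lemma sinh_shift_le m u : 1 <= m -> 0 < u ->
  sinh ((m + 2) * u) <= sinh (m * u) * exp (2 * u) * ((m + 2) / m).
Proof.
  intros Hm Hu.
  replace ((m + 2) * u) with (m * u + 2 * u) by ring. rewrite sinh_add.
  assert (Hmu : 0 < m * u) by nra.
  pose proof (cosh_le_sinh_mul (m * u) Hmu) as Hc.
  pose proof (sinh_le_mul_exp (2 * u) ltac:(lra)) as Hs.
  pose proof (sinh_pos (m * u) Hmu). pose proof (sinh_pos (2 * u) ltac:(lra)).
  assert (Hexp : cosh (2 * u) + sinh (2 * u) = exp (2 * u)) by (unfold cosh, sinh; field).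
  set (S := sinh (m * u)) in *. set (C := cosh (m * u)) in *. set (s := sinh (2 * u)) in *.
  set (c := cosh (2 * u)) in *. set (E := exp (2 * u)) in *.
  apply Rle_trans with (S * c + S * (1 + / (m * u)) * s).
  { apply Rplus_le_compat_l, Rmult_le_compat_r; lra. }
  replace (S * c + S * (1 + / (m * u)) * s) with (S * (c + s) + S * s / (m * u)) by (field; lra).
  replace (S * E * ((m + 2) / m)) with (S * E + S * (2 * u * E) / (m * u)) by (field; lra).
  rewrite Hexp. apply Rplus_le_compat_l. unfold Rdiv.
  apply Rmult_le_compat_r; [apply Rlt_le, Rinv_0_lt_compat; lra|].
  apply Rmult_le_compat_l; lra.
Qed.

Lemma mul_exp_cosh_le m u : 1 <= m -> 0 <= u <= PI/2 ->
  m * exp (2 * u) * cosh (m * PI / 2) <= (m + 2) * cosh ((m + 2) * PI / 2).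
Proof.
  intros Hm Hu. pose proof PI2_3_2.
  assert (He : exp (2 * u) <= exp PI).
  { destruct (Req_dec (2 * u) PI) as [->|]; [lra|]. apply Rlt_le, exp_increasing. lra. }
  pose proof (cosh_pos (m * PI / 2)).
  apply Rle_trans with (m * exp PI * cosh (m * PI / 2)).
  { apply Rmult_le_compat_r; [lra|]. apply Rmult_le_compat_l; lra. }
  unfold cosh.
  assert (E1 : exp PI * exp (m * PI / 2) = exp ((m + 2) * PI / 2))
    by (rewrite <- exp_plus; f_equal; field).
  assert (E2 : exp PI * exp (- (m * PI / 2)) = exp (PI - m * PI / 2))
    by (rewrite <- exp_plus; f_equal; field).
  assert (E3 : exp (PI - m * PI / 2) * exp (m * PI) = exp ((m + 2) * PI / 2))
    by (rewrite <- exp_plus; f_equal; field).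
  assert (H4 : 1 + m * PI <= exp (m * PI)) by apply exp_ineq1_le.
  pose proof (exp_pos (PI - m * PI / 2)). pose proof (exp_pos (- ((m + 2) * PI / 2))).
  replace (m * exp PI * ((exp (m * PI / 2) + exp (- (m * PI / 2))) / 2)) with
    (m * (exp PI * exp (m * PI / 2) + exp PI * exp (- (m * PI / 2))) / 2) by field.
  rewrite E1, E2, <- E3.
  set (Q := exp (PI - m * PI / 2)) in *. set (X := exp (m * PI)) in *.
  set (Y := exp (- ((m + 2) * PI / 2))) in *.
  assert (m <= 2 * X) by nra.
  assert (m * Q <= 2 * (Q * X)) by nra.
  apply (Rmult_le_reg_r 2); [lra|].
  replace (m * (Q * X + Q) / 2 * 2) with (m * (Q * X) + m * Q) by field.
  replace ((m + 2) * ((Q * X + Y) / 2) * 2) with ((m + 2) * (Q * X) + (m + 2) * Y) by field.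
  nra.
Qed.

Definition mode_slope (m u : R) : R := sinh (m * u) / (m ^ 2 * cosh (m * PI / 2)).

Lemma mode_slope_nonneg m u : 0 < m -> 0 <= u -> 0 <= mode_slope m u.
Proof.
  intros Hm Hu. unfold mode_slope. pose proof (cosh_pos (m * PI / 2)). pose proof (pow_lt m 2 Hm).
  apply Rmult_le_pos; [|apply Rlt_le, Rinv_0_lt_compat; nra].
  destruct (Req_dec u 0) as [->|]; [rewrite Rmult_0_r, sinh_0; lra|].
  apply Rlt_le, sinh_pos. nra.
Qed.

Lemma mode_slope_shift_le m u : 1 <= m -> 0 <= u <= PI/2 ->
  mode_slope (m + 2) u <= mode_slope m u.
Proof.
  intros Hm Hu. unfold mode_slope.
  pose proof (cosh_pos ((m + 2) * PI / 2)). pose proof (cosh_pos (m * PI / 2)).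
  destruct (Req_dec u 0) as [->|Hu0].
  { rewrite !Rmult_0_r, sinh_0. unfold Rdiv. rewrite !Rmult_0_l. lra. }
  pose proof (sinh_shift_le m u Hm ltac:(lra)).
  pose proof (mul_exp_cosh_le m u Hm Hu).
  pose proof (sinh_pos (m * u) ltac:(nra)).
  set (A := sinh ((m + 2) * u)) in *. set (S := sinh (m * u)) in *. set (E := exp (2 * u)) in *.
  set (C2 := cosh ((m + 2) * PI / 2)) in *. set (C0 := cosh (m * PI / 2)) in *.
  apply Rle_trans with (S * E * ((m + 2) / m) / ((m + 2) ^ 2 * C2)).
  { unfold Rdiv. apply Rmult_le_compat_r; [apply Rlt_le, Rinv_0_lt_compat; nra | assumption]. }
  replace (S * E * ((m + 2) / m) / ((m + 2) ^ 2 * C2))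
    with (S * (m * E * C0) / (m ^ 2 * (m + 2) * C2 * C0)) by (field; repeat split; lra).
  replace (S / (m ^ 2 * C0))
    with (S * ((m + 2) * C2) / (m ^ 2 * (m + 2) * C2 * C0)) by (field; repeat split; lra).
  unfold Rdiv. apply Rmult_le_compat_r.
  - apply Rlt_le, Rinv_0_lt_compat. apply Rmult_lt_0_compat; [|lra].
    apply Rmult_lt_0_compat; [|lra]. apply Rmult_lt_0_compat; nra.
  - apply Rmult_le_compat_l; lra.
Qed.

Lemma is_derive_mode_profile_div m t : 0 < m ->
  is_derive (fun s => / m * mode_profile m s) t (PI / 4 * mode_slope m (PI/2 - t)).
Proof.
  intro Hm. replace (PI / 4 * mode_slope m (PI / 2 - t)) with (/ m * mode_profile_deriv m t).
  - apply (is_derive_scal (mode_profile m)). now apply is_derive_mode_profile.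
  - unfold mode_profile_deriv, mode_slope. pose proof (cosh_pos (m * PI / 2)). field. lra.
Qed.

Section ProfileIncrements.
Variables phi0 phi : R.
Hypothesis Hphi : 0 <= phi0 <= phi /\ phi <= PI/2.

Definition profile_increment (k : nat) : R :=
  / oddR k * mode_profile (oddR k) phi - / oddR k * mode_profile (oddR k) phi0.

Lemma profile_increment_nonneg k : 0 <= profile_increment k.
Proof.
  unfold profile_increment. pose proof (oddR_ge_1 k).
  enough (/ oddR k * mode_profile (oddR k) phi0 <= / oddR k * mode_profile (oddR k) phi) by lra.
  apply (is_derive_nonneg_le (fun t => / oddR k * mode_profile (oddR k) t)
           (fun t => PI / 4 * mode_slope (oddR k) (PI/2 - t)) phi0 phi); [lra| |].
  - intros c _. apply is_derive_mode_profile_div. lra.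
  - intros c Hc. pose proof PI_RGT_0.
    pose proof (mode_slope_nonneg (oddR k) (PI/2 - c) ltac:(lra) ltac:(lra)). nra.
Qed.

(* The increments decrease in [k] because their [phi]-derivatives
   [PI/4 * mode_slope (oddR k) (PI/2 - phi)] do. *)
Lemma profile_increment_S_le k : profile_increment (S k) <= profile_increment k.
Proof.
  unfold profile_increment. rewrite oddR_S. pose proof (oddR_ge_1 k). set (m := oddR k) in *.
  set (g := fun t => / m * mode_profile m t - / (m + 2) * mode_profile (m + 2) t).
  enough (g phi0 <= g phi) by (unfold g in *; lra).
  apply (is_derive_nonneg_le g
           (fun t => PI / 4 * mode_slope m (PI/2 - t) - PI / 4 * mode_slope (m + 2) (PI/2 - t))
           phi0 phi);
    [lra| |].
  - intros c _. apply (is_derive_minus (fun t => / m * mode_profile m t));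
      apply is_derive_mode_profile_div; lra.
  - intros c Hc. pose proof PI_RGT_0.
    pose proof (mode_slope_shift_le m (PI/2 - c) ltac:(lra) ltac:(lra)). nra.
Qed.

End ProfileIncrements.

Lemma psi0_antitone_y x y y0 : 0 < x < 1/2 -> 0 <= y0 <= y -> y <= 1/4 -> psi0 x y <= psi0 x y0.
Proof.
  intros Hx Hy Hy4. pose proof PI_RGT_0.
  set (theta := 2 * PI * x). set (phi := 2 * PI * y). set (phi0 := 2 * PI * y0).
  assert (Htheta : 0 < theta < PI) by (unfold theta; nra).
  assert (Hphi : 0 <= phi0 <= phi /\ phi <= PI/2) by (unfold phi, phi0; nra).
  assert (Hdiff := is_series_minus _ _ _ _ (is_series_psi0 x y ltac:(lra))
                                           (is_series_psi0 x y0 ltac:(lra))).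
  enough (0 <= - psi0 x y - - psi0 x y0) by lra.
  apply (is_series_nonneg _ _ Hdiff). intro N.
  rewrite (sum_n_ext_R _
             (fun k => 4 / PI ^ 4 * (sin (oddR k * theta) * profile_increment phi0 phi k))).
  - rewrite sum_n_scal_R. apply Rmult_le_pos.
    + apply Rlt_le, Rdiv_lt_0_compat; [lra | apply pow_lt; lra].
    + apply sum_n_Abel_nonneg.
      * intro k. now apply sum_sin_oddR_nonneg.
      * intro k. now apply profile_increment_nonneg.
      * intro k. now apply profile_increment_S_le.
  - intro k. unfold profile_increment. fold theta phi phi0. pose proof (oddR_ge_1 k).
    unfold plus, opp; simpl. R_eq. field. split; lra.
Qed.

Theorem lemma2p4 (x y : R) :
  0 < y -> y < x -> x < 1/4 -> Rbar_lt eps1 (Finite (psi0 x y)) -> y < 1/2000.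
Proof.
  intros Hy Hyx Hx Heps.
  destruct (Rlt_or_le y (1/2000)) as [Hlt|Hge]; [exact Hlt|exfalso].
  assert (Hmono : psi0 x y <= psi0 x (1/2000)) by (apply psi0_antitone_y; lra).
  assert (Hsup : Rbar_le (psi0 x (1/2000)) eps1).
  { apply (proj1 (Lub_Rbar_correct _)). exists x. split; [lra | reflexivity]. }
  destruct eps1; simpl in *; lra.
Qed.
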